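(* For $w\in S_n$, $$\Delta(\bar\chi^w)=\sum\bar\chi^{\,y_B}\otimes\bar\chi^{\,u_A},$$ the sum over all decompositions $A\sqcup B=\{1,\dots,n\}$ such that $\iota(w)_B$ is an inversion table, where $y_B\in S_{|B|}$ is the permutation with inversion table $\iota(w)_B$ and $u_A\in S_{|A|}$ is the permutation whose dual inversion table is the componentwise minimum $\iota^\vee(w)_A\wedge\iota^\vee(\mathrm{id}_{|A|})$, i.e. writing $A=\{a_1<\dots<a_r\}$, $\iota^\vee_k(u_A)=\min(n-a_k-\iota_{a_k}(w),\,r-k)$ for $1\le k\le r$.
   Context: Let $q$ be a prime power, $\mathfrak{ut}_N$ the additive group of strictly upper triangular $N\times N$ matrices over $\mathbb{F}_q$, $e_{ij}(t)$ the matrix with $t$ at $(i,j)$ and zeros elsewhere. For $w\in S_N$: $\iota_k(w)=\#\{i<w^{-1}(k):w(i)>k\}$ (inversion table) and $\iota^\vee_k(w)=N-k-\iota_k(w)$ (dual inversion table); a sequence $(c_1,\dots,c_\ell)$ is an inversion table iff $0\le c_k\le\ell-k$ for all $k$, and then it determines a unique permutation of $S_\ell$; similarly a dual inversion table. For $B=\{b_1<\dots<b_\ell\}$, $\iota(w)_B=(\iota_{b_1}(w),\dots,\iota_{b_\ell}(w))$. $\mathfrak{ut}_w=\{x:x_{ij}\ne0\Rightarrow0<j-i\le\iota_i(w)\}$; these form a lattice of subgroups whose normal lattice supercharacter theory has supercharacters $\chi^w=\sum_\psi\psi(1)\psi$ over irreducible $\psi$ with $\mathfrak{ut}_w$ the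 largest lattice member in $\ker\psi$; $\mathrm{scf}(\mathfrak{ut}_N)$ is their span. $\bar\chi^w$ is the character of $\mathrm{Ind}_{\mathfrak{ut}_w}^{\mathfrak{ut}_N}(\mathbf 1)$, equal to $\sum_{v:\mathfrak{ut}_v\supseteq\mathfrak{ut}_w}\chi^v$. For $A\subseteq\{1,\dots,N\}$ with $|A|=k$, $m=N-k$: with $c_i=N-\#\{a\in A:a>i\}$ let $U_A=\{(i,j):i\in A,j>c_i\}$, $L_A=\{(i,j):i\in A,j\le c_i\}$, $U_A^\vee=\{(i,j):i\notin A,j\le c_i\}$, $R_A=\{(i,j):i\notin A,j>c_i\}$ (with $i<j$), and $\mathfrak{ut}_A,\mathfrak{l}_A,\mathfrak{ut}_A^\vee,\mathfrak{r}_A$ the subgroups supported on them; identify $\mathfrak{ut}_A^\vee\cong\mathfrak{ut}_m$ via $e_{ij}(t)\mapsto e_{i-s,j-s}(t)$, $s=\#\{a\in A:a<i\}$, and $\mathfrak{ut}_A\cong\mathfrak{ut}_k$ via $e_{ij}(t)\mapsto e_{i-\#\{b<i:b\notin A\},j-m}(t)$. $\mathrm{Dela}_A(\gamma)(u',u)=q^{-|L_A|-|R_A|}\sum_{l\in\mathfrak{l}_A,r\in\mathfrak{r}_A}(\frac{-1}{q-1})^{\#\{(i,j):r_{ij}\ne0\}}\gamma(l+u'+u+r)$, an element of $\mathrm{scf}(\mathfrak{ut}_m)\otimes\mathrm{scf}(\mathfrak{ut}_k)$. The coproduct is $\Delta(\alpha)=\sum_{A\subseteq\{1,\dots,N\}}\mathrm{Dela}_A(\alpha)$.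 *)

From HB Require Import structures.
From mathcomp Require Import all_boot all_order all_algebra fingroup perm algC.
Set Implicit Arguments. Unset Strict Implicit. Unset Printing Implicit Defensive.
Import GRing.Theory Num.Theory.
Local Open Scope ring_scope.

(* Conventions: indices are 0-based ordinals 'I_N; the ordinal i represents
   the paper's index i+1.  All differences/comparisons used by the paper are
   shift-invariant, except c_i and the dual inversion table, where we shift
   explicitly (i.+1). *)

Section Defs.
Variable F : finFieldType.

Definition ut (N : nat) : {set 'M[F]_N} :=
  [set x : 'M[F]_N | [forall i, forall j, (x i j != 0) ==> (i < j)%N]].

Definition invc (N : nat) (w : 'S_N) (k : 'I_N) : nat :=
  #|[set i : 'I_N | (i < (w^-1)%g k)%N && (k < w i)%N]|.

Definition utw (N : nat) (w : 'S_N) : {set 'M[F]_N} :=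
  [set x : 'M[F]_N | [forall i, forall j,
     (x i j != 0) ==> ((i < j)%N && (j <= i + invc w i)%N)]].

(* character of Ind_{ut_w}^{ut_N}(1), by the induced character formula
   Ind phi (x) = |H|^-1 sum_{g in G} phi°(g x g^-1) (additive notation) *)
Definition chibar (N : nat) (w : 'S_N) (x : 'M[F]_N) : algC :=
  (#|utw w|%:R)^-1 * \sum_(g in ut N) ((g + x - g \in utw w) : nat)%:R.

Section Dela.
Variables (N k : nat) (A : {set 'I_N}).

Definition cA (i : 'I_N) : nat := (N - #|[set a in A | (i < a)%N]|)%N.

Definition inU (i j : 'I_N) : bool := [&& i \in A, (cA i < j.+1)%N & (i < j)%N].
Definition inL (i j : 'I_N) : bool := [&& i \in A, (j.+1 <= cA i)%N & (i < j)%N].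
Definition inUv (i j : 'I_N) : bool := [&& i \notin A, (j.+1 <= cA i)%N & (i < j)%N].
Definition inR (i j : 'I_N) : bool := [&& i \notin A, (cA i < j.+1)%N & (i < j)%N].

Definition suppg (P : 'I_N -> 'I_N -> bool) : {set 'M[F]_N} :=
  [set x : 'M[F]_N | [forall i, forall j, (x i j != 0) ==> P i j]].

Definition npos (P : 'I_N -> 'I_N -> bool) : nat :=
  #|[set p : 'I_N * 'I_N | P p.1 p.2]|.

Definition sA (i : 'I_N) : nat := #|[set a in A | (a < i)%N]|.
Definition tA (i : 'I_N) : nat := #|[set b | (b \notin A) && (b < i)%N]|.

(* ut_A^v -> ut_m,  e_ij(t) |-> e_{i-s, j-s}(t), extended additively *)
Definition phiA (x : 'M[F]_N) : 'M[F]_(N - k) :=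
  \matrix_(i', j') \sum_(i : 'I_N) \sum_(j : 'I_N |
      [&& inUv i j, (i - sA i == i')%N & (j - sA i == j')%N]) x i j.

(* ut_A -> ut_k,  e_ij(t) |-> e_{i - #{b<i, b notin A}, j - m}(t) *)
Definition psiA (y : 'M[F]_N) : 'M[F]_k :=
  \matrix_(i', j') \sum_(i : 'I_N) \sum_(j : 'I_N |
      [&& inU i j, (i - tA i == i')%N & (j - (N - k) == j')%N]) y i j.

Definition nnz (r : 'M[F]_N) : nat := #|[set p : 'I_N * 'I_N | r p.1 p.2 != 0]|.

(* Dela_A(gamma)(u', u), meaningful for #|A| = k *)
Definition Dela (gamma : 'M[F]_N -> algC) (u' : 'M[F]_(N - k)) (u : 'M[F]_k)
  : algC :=
  ((#|F|%:R : algC) ^- (npos inL + npos inR)) *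
  \sum_(l in suppg inL) \sum_(r in suppg inR)
  \sum_(x in suppg inUv | phiA x == u') \sum_(y in suppg inU | psiA y == u)
     ((- 1 / (#|F|%:R - 1)) ^+ nnz r * gamma (l + x + y + r)).

End Dela.

(* degree-(N-k, k) component of Delta(gamma) = sum_A Dela_A(gamma) *)
Definition Delta (N : nat) (gamma : 'M[F]_N -> algC) (k : nat)
  (u' : 'M[F]_(N - k)) (u : 'M[F]_k) : algC :=
  \sum_(A : {set 'I_N} | #|A| == k) Dela A gamma u' u.

End Defs.

Definition invtab (l : nat) (y : 'S_l) : seq nat := [seq invc y i | i : 'I_l <- enum 'I_l].
Definition dinvtab (l : nat) (y : 'S_l) : seq nat :=
  [seq (l - i.+1 - invc y i)%N | i : 'I_l <- enum 'I_l].

Definition sub_invtab (N : nat) (w : 'S_N) (B : {set 'I_N}) : seq nat :=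
  [seq invc w b | b <- enum B].

Definition is_invtable (c : seq nat) : bool :=
  all (fun i => nth 0%N c i <= size c - i.+1)%N (iota 0 (size c)).

Definition yB (N : nat) (w : 'S_N) (A : {set 'I_N}) (k : nat) : 'S_(N - k) :=
  odflt 1%g [pick y : 'S_(N - k) | invtab y == sub_invtab w (~: A)].

Definition uA (N : nat) (w : 'S_N) (A : {set 'I_N}) (k : nat) : 'S_k :=
  odflt 1%g [pick u : 'S_k | dinvtab u ==
     [seq minn (N - (p.2 : 'I_N).+1 - invc w p.2) (k - p.1.+1)
        | p <- zip (iota 0 k) (enum A)]].

Arguments Delta {F N} gamma k u' u.
Arguments Dela {F N} k A gamma u' u.
Arguments ut F N.

(* Since ut_N is abelian, chibar^w is [ut_N : ut_w] times the indicator of ut_w, the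
   set of matrices supported on the positions (i, j) with 0 < j - i <= iota_i(w).  The
   blocks L_A, U_A^v, U_A, R_A partition the strict upper triangle, so l + x + y + r lies
   in ut_w iff each summand does, and Dela_A(chibar^w) splits into four sums.  The sum
   over l is a power of q.  The signed sum over r factors over the positions of R_A
   allowed by w into (1 + (q - 1) (-1/(q - 1)))^m = 0^m, and m = 0 exactly when
   iota(w)_B is an inversion table.  In the sums over x and y only the preimages of u'
   and u under the reindexings onto ut_m and ut_k survive, and these reindexings carry
   the positions allowed by w onto those allowed by y_B and u_A.  Counting positions
   block by block then matches the normalising powers of q. *)

From mathcomp Require Import all_boot all_order all_algebra fingroup perm algC.
From mathcomp Require Import zify ring.
Set Implicit Arguments. Unset Strict Implicit. Unset Printing Implicit Defensive.
Import GRing.Theory Num.Theory.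
Local Open Scope ring_scope.

Section Support.
Variables (F : finFieldType) (N : nat).
Implicit Types (P Q : 'I_N -> 'I_N -> bool) (x y : 'M[F]_N).

Lemma suppgP P x : reflect (forall i j, x i j != 0 -> P i j) (x \in suppg F P).
Proof.
rewrite inE; apply: (iffP forallP) => [H i j|H i].
  by move=> nz; have /forallP/(_ j)/implyP := H i; apply.
by apply/forallP => j; apply/implyP; apply: H.
Qed.

Lemma suppgI P Q x :
  (x \in suppg F (fun i j => P i j && Q i j)) = (x \in suppg F P) && (x \in suppg F Q).
Proof.
apply/suppgP/andP => [H|[/suppgP HP /suppgP HQ] i j nz]; last by rewrite HP ?HQ.
by split; apply/suppgP => i j /H /andP[].
Qed.

Lemma suppgD P Q x y : x \in suppg F P -> y \in suppg F Q ->
  x + y \in suppg F (fun i j => P i j || Q i j).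
Proof.
move=> /suppgP Hx /suppgP Hy; apply/suppgP => i j; rewrite mxE.
have [->|/Hx ->] := eqVneq (x i j) 0; last by [].
by rewrite add0r => /Hy ->; rewrite orbT.
Qed.

Lemma suppgD_disjoint P Q S x y : (forall i j, P i j -> Q i j -> false) ->
  x \in suppg F P -> y \in suppg F Q ->
  (x + y \in suppg F S) = (x \in suppg F S) && (y \in suppg F S).
Proof.
move=> PQ /suppgP Hx /suppgP Hy.
have xy0 i j : (x i j = 0) \/ (y i j = 0).
  have [x0|/Hx Pij] := eqVneq (x i j) 0; [by left | right].
  by apply/eqP/contraT => /Hy /(PQ _ _ Pij).
have xyE i j : (x + y) i j = if x i j == 0 then y i j else x i j.
  by rewrite mxE; case: (xy0 i j) => ->; rewrite ?eqxx ?add0r ?addr0 //; case: eqP.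
apply/suppgP/andP => [H|[/suppgP HxS /suppgP HyS] i j].
  split; apply/suppgP => i j nz; apply: H; rewrite xyE.
    by rewrite (negPf nz).
  by case: (xy0 i j) nz => [->|->]; rewrite ?eqxx.
by rewrite xyE; have [_|_] := eqVneq (x i j) 0; [apply: HyS | apply: HxS].
Qed.

Definition mx_of_ffun (f : {ffun 'I_N * 'I_N -> F}) : 'M[F]_N := \matrix_(i, j) f (i, j).

Lemma mx_of_ffun_bij : bijective mx_of_ffun.
Proof.
exists (fun x => [ffun p => x p.1 p.2]) => [f|x]; last by apply/matrixP => i j; rewrite !mxE ffunE.
by apply/ffunP => -[i j]; rewrite ffunE mxE.
Qed.

(* Summing over matrices supported on Q factors as a product over the positions of Q. *)
Lemma sum_suppg_exp_nnz Q (a : algC) :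
  \sum_(r in suppg F Q) a ^+ nnz r = (1 + (#|F|.-1)%:R * a) ^+ npos Q.
Proof.
set S := [set p : 'I_N * 'I_N | Q p.1 p.2].
have -> : 1 + (#|F|.-1)%:R * a = \sum_(t : F) a ^+ (t != 0).
  rewrite (bigD1 0) //= eqxx expr0; congr (_ + _).
  by under eq_bigr => t nt do rewrite nt expr1; rewrite sumr_const cardC1 mulr_natl.
rewrite /npos -/S -prodr_const (big_distr_big_dep 0) (reindex _ (onW_bij _ mx_of_ffun_bij)).
apply: eq_big => [f|f /suppgP fQ].
  apply/suppgP/pfamilyP => [H|[/subsetP fS _] i j]; last by rewrite mxE => /fS; rewrite inE.
  split=> //; apply/subsetP => -[i j]; rewrite !inE => nz; apply: H.
  by rewrite mxE.
rewrite (eq_bigr (fun p => if f p != 0 then a else 1)); last by move=> p _; case: (f p != 0).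
rewrite -big_mkcondr prodr_const /nnz; congr (_ ^+ _); apply: eq_card => -[i j].
rewrite !inE mxE /=; apply/idP/andP => [nz|[]//]; split=> //.
by rewrite inE; apply: fQ; rewrite mxE.
Qed.

Lemma card_suppg P : #|suppg F P| = (#|F| ^ npos P)%N.
Proof.
have := sum_suppg_exp_nnz P 1; under eq_bigr do rewrite expr1n.
rewrite sumr_const mulr1 nat1r prednK; last by apply/card_gt0P; exists 0.
by move=> E; apply/eqP; rewrite -(eqr_nat algC) natrX E.
Qed.

End Support.

Definition rmap (F : finFieldType) N1 N2 (R : 'I_N1 -> 'I_N1 -> 'I_N2 -> 'I_N2 -> bool)
    (x : 'M[F]_N1) : 'M[F]_N2 :=
  \matrix_(a, b) \sum_(i : 'I_N1) \sum_(j : 'I_N1 | R i j a b) x i j.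

Definition rel_inv N1 N2 (R : 'I_N1 -> 'I_N1 -> 'I_N2 -> 'I_N2 -> bool) a b i j := R i j a b.

Record pos_bij N1 N2 (R : 'I_N1 -> 'I_N1 -> 'I_N2 -> 'I_N2 -> bool)
    (P : 'I_N1 -> 'I_N1 -> bool) (Q : 'I_N2 -> 'I_N2 -> bool) : Prop := PosBij {
  pos_bij_injl : forall i j c d a b, R i j a b -> R c d a b -> i = c /\ j = d;
  pos_bij_injr : forall i j a b c d, R i j a b -> R i j c d -> a = c /\ b = d;
  pos_bij_dom : forall i j a b, R i j a b -> P i j;
  pos_bij_codom : forall i j a b, R i j a b -> Q a b;
  pos_bij_total : forall i j, P i j -> exists a b, R i j a b;
  pos_bij_onto : forall a b, Q a b -> exists i j, R i j a b }.

Lemma pos_bij_inv N1 N2 R P Q : @pos_bij N1 N2 R P Q -> pos_bij (rel_inv R) Q P.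
Proof. by case=> injl injr dom codom total onto; split; eauto. Qed.

Section RmapEntries.
Variables (F : finFieldType) (N1 N2 : nat).
Variables (R : 'I_N1 -> 'I_N1 -> 'I_N2 -> 'I_N2 -> bool).
Variables (P : 'I_N1 -> 'I_N1 -> bool) (Q : 'I_N2 -> 'I_N2 -> bool).
Hypothesis hR : pos_bij R P Q.

Lemma rmapE (x : 'M[F]_N1) i j a b : R i j a b -> rmap R x a b = x i j.
Proof.
move=> Rij; rewrite mxE (bigD1 i) //= (bigD1 j) //= big1 ?addr0.
  rewrite big1 ?addr0 // => i' ne; apply: big1 => j' R'.
  by have [ei _] := pos_bij_injl hR Rij R'; rewrite ei eqxx in ne.
move=> j' /andP[R' ne].
by have [_ ej] := pos_bij_injl hR Rij R'; rewrite ej eqxx in ne.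
Qed.

Lemma rmapE0 (x : 'M[F]_N1) a b : (forall i j, ~~ R i j a b) -> rmap R x a b = 0.
Proof.
by move=> nR; rewrite mxE big1 // => i _; rewrite big1 // => j; rewrite (negPf (nR i j)).
Qed.

End RmapEntries.

Section RmapInverse.
Variables (F : finFieldType) (N1 N2 : nat).
Variables (R : 'I_N1 -> 'I_N1 -> 'I_N2 -> 'I_N2 -> bool).
Variables (P : 'I_N1 -> 'I_N1 -> bool) (Q : 'I_N2 -> 'I_N2 -> bool).
Hypothesis hR : pos_bij R P Q.
Let hRi := pos_bij_inv hR.

Lemma rmap_inv_suppg (P2 : 'I_N1 -> 'I_N1 -> bool) (Q2 : 'I_N2 -> 'I_N2 -> bool)
    (y : 'M[F]_N2) :
  (forall i j a b, R i j a b -> P2 i j = Q2 a b) -> y \in suppg F Q ->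
  (rmap (rel_inv R) y \in suppg F P2) = (y \in suppg F Q2).
Proof.
move=> RPQ /suppgP yQ; apply/suppgP/suppgP => H.
  move=> a b /[dup] /yQ /(pos_bij_onto hR)[i [j Rij]] nz.
  by rewrite -(RPQ _ _ _ _ Rij); apply: H; rewrite (rmapE hRi _ Rij).
move=> i j; have [[a b] /= Rij|nR] := pickP (fun ab : 'I_N2 * 'I_N2 => R i j ab.1 ab.2).
  by rewrite (rmapE hRi _ Rij) (RPQ _ _ _ _ Rij); apply: H.
by rewrite rmapE0 ?eqxx // => a b; apply/negbT/(nR (a, b)).
Qed.

Lemma rmap_invK (y : 'M[F]_N2) : y \in suppg F Q -> rmap R (rmap (rel_inv R) y) = y.
Proof.
move=> /suppgP yQ; apply/matrixP => a b.
have [[i j] /= Rij|nR] := pickP (fun ij : 'I_N1 * 'I_N1 => R ij.1 ij.2 a b).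
  by rewrite (rmapE hR _ Rij) (rmapE hRi _ Rij).
rewrite rmapE0; last by move=> i j; apply/negbT/(nR (i, j)).
apply/esym/eqP/contraT => /yQ /(pos_bij_onto hR)[i [j Rij]].
by have := nR (i, j); rewrite /= Rij.
Qed.

End RmapInverse.

Section PositionBijection.
Variables (F : finFieldType) (N1 N2 : nat).
Variables (R : 'I_N1 -> 'I_N1 -> 'I_N2 -> 'I_N2 -> bool).
Variables (P : 'I_N1 -> 'I_N1 -> bool) (Q : 'I_N2 -> 'I_N2 -> bool).
Hypothesis hR : pos_bij R P Q.

Lemma rmapK (x : 'M[F]_N1) : x \in suppg F P -> rmap (rel_inv R) (rmap R x) = x.
Proof. exact: (rmap_invK (pos_bij_inv hR)). Qed.

Lemma sum_rmap_eq (y : 'M[F]_N2) (f : 'M[F]_N1 -> algC) : y \in suppg F Q ->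
  \sum_(x in suppg F P | rmap R x == y) f x = f (rmap (rel_inv R) y).
Proof.
move=> yQ; rewrite (big_pred1 (rmap (rel_inv R) y)) // => x /=.
apply/andP/eqP => [[xP /eqP <-]|->]; first by rewrite rmapK.
rewrite (rmap_inv_suppg hR (Q2 := Q)) ?(rmap_invK hR) ?yQ // => i j a b Rij.
by rewrite (pos_bij_dom hR Rij) (pos_bij_codom hR Rij).
Qed.

Lemma npos_pos_bij (P2 : 'I_N1 -> 'I_N1 -> bool) (Q2 : 'I_N2 -> 'I_N2 -> bool) :
  (forall i j a b, R i j a b -> P2 i j = Q2 a b) ->
  (forall i j, P2 i j -> P i j) -> (forall a b, Q2 a b -> Q a b) ->
  npos P2 = npos Q2.
Proof.
move=> RPQ P2P Q2Q.
pose T := [set p : ('I_N1 * 'I_N1) * ('I_N2 * 'I_N2) | R p.1.1 p.1.2 p.2.1 p.2.2 && P2 p.1.1 p.1.2].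
have TR p : p \in T -> R p.1.1 p.1.2 p.2.1 p.2.2 by rewrite inE => /andP[].
rewrite /npos; transitivity #|T|.
  rewrite -(card_in_imset (f := fst) (D := T)); last first.
    move=> [[i j] [a b]] [[i' j'] [a' b']] /TR /= Rij /TR /= Rij' /= [ei ej]; subst i' j'.
    by have [-> ->] := pos_bij_injr hR Rij Rij'.
  apply: eq_card => -[i j]; rewrite inE; apply/idP/imsetP => [P2ij|[[[i' j'] ab] + [-> ->]]].
    have [a [b Rij]] := pos_bij_total hR (P2P _ _ P2ij).
    by exists ((i, j), (a, b)); rewrite // inE Rij.
  by rewrite inE => /andP[].
rewrite -(card_in_imset (f := snd) (D := T)); last first.
  move=> [[i j] [a b]] [[i' j'] [a' b']] /TR /= Rij /TR /= Rij' /= [ea eb]; subst a' b'.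
  by have [-> ->] := pos_bij_injl hR Rij Rij'.
apply: eq_card => -[a b]; rewrite inE; apply/imsetP/idP => [[[ij [a' b']] + [-> ->]]|Q2ab].
  by rewrite inE /= => /andP[Rij]; rewrite (RPQ _ _ _ _ Rij).
have [i [j Rij]] := pos_bij_onto hR (Q2Q _ _ Q2ab).
by exists ((i, j), (a, b)); rewrite // inE /= Rij (RPQ _ _ _ _ Rij).
Qed.

End PositionBijection.

Section OrderedEnum.
Variable N : nat.

Lemma count_ltn_iota0 i n : (i <= n)%N -> count (fun j => (j < i)%N) (iota 0 n) = i.
Proof.
move=> le; rewrite -(subnKC le) iotaD count_cat add0n.
rewrite (eq_in_count (a2 := predT)) ?count_predT ?size_iota; last first.
  by move=> j; rewrite mem_iota add0n => /andP[_ ->].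
rewrite (eq_in_count (a2 := pred0)) ?count_pred0 ?addn0 //.
by move=> j; rewrite mem_iota => /andP[h _] /=; rewrite ltnNge h.
Qed.

Lemma enum_ltn_sorted (B : {set 'I_N}) : sorted (fun x y : 'I_N => (x < y)%N) (enum B).
Proof.
rewrite /enum_mem; apply: sorted_filter; first by move=> x y z; apply: ltn_trans.
by rewrite -enumT; have := iota_ltn_sorted 0 N; rewrite -val_enum_ord sorted_map.
Qed.

Lemma card_lt_nth_enum (B : {set 'I_N}) x0 i : (i < #|B|)%N ->
  #|[set c in B | (c < nth x0 (enum B) i)%N]| = i.
Proof.
move=> iB; set s := enum B; have ss : size s = #|B| by rewrite cardE.
have tr : transitive (fun x y : 'I_N => (x < y)%N) by move=> x y z; apply: ltn_trans.
set b := nth x0 s i.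
rewrite -sum1_card (eq_bigl (fun c => (c \in B) && (c < b)%N)); last by move=> c; rewrite inE.
rewrite -big_enum_cond sum1_count -/s -{1}(mkseq_nth x0 s) /mkseq count_map.
rewrite (eq_in_count (a2 := fun j => (j < i)%N)); last first.
  move=> j; rewrite mem_iota add0n /= => js; have srt := enum_ltn_sorted B.
  case: (ltngtP j i) => [ji|ij|->]; last by rewrite ltnn.
    by rewrite (sorted_ltn_nth tr x0 srt) // inE ?ss.
  by apply/negbTE; rewrite -leqNgt ltnW // (sorted_ltn_nth tr x0 srt) // inE ?ss.
by rewrite count_ltn_iota0 // ss ltnW.
Qed.

Lemma nth_enum_card_lt (B : {set 'I_N}) x0 b : b \in B ->
  nth x0 (enum B) #|[set c in B | (c < b)%N]| = b.
Proof.
move=> bB; have bs : b \in enum B by rewrite mem_enum.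
have := index_mem b (enum B); rewrite bs -cardE => /(card_lt_nth_enum x0).
by rewrite nth_index // => ->; apply: nth_index.
Qed.

Lemma card_ord_lt (i : 'I_N) : #|[set c : 'I_N | (c < i)%N]| = i.
Proof.
have := @card_lt_nth_enum [set: 'I_N] i i; rewrite cardsT card_ord ltn_ord => /(_ isT).
rewrite enum_setT -enumT nth_ord_enum => E.
by apply: etrans E; apply: eq_card => c; rewrite !inE.
Qed.

End OrderedEnum.

Section Blocks.
Variables (N k : nat) (A : {set 'I_N}).
Hypothesis hA : #|A| = k.

Lemma leq_card_N : (k <= N)%N.
Proof. by rewrite -hA; apply: leq_trans (max_card _) _; rewrite card_ord. Qed.

Lemma card_setC_A : #|~: A| = (N - k)%N.
Proof. by have := cardsC A; rewrite card_ord hA; lia. Qed.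

Lemma sA_add_tA (i : 'I_N) : (sA A i + tA A i)%N = i.
Proof.
rewrite -[RHS](card_ord_lt i) -(cardsID A [set c : 'I_N | (c < i)%N]).
by congr addn; apply: eq_card => c; rewrite !inE // andbC.
Qed.

Lemma sA_add_card_gt (i : 'I_N) : (sA A i + #|[set a in A | (i < a)%N]| + (i \in A))%N = k.
Proof.
rewrite -hA -(cardsID [set c : 'I_N | (c < i)%N] A) (cardsD1 i (A :\: _)) -addnA.
rewrite [(#|_| + (i \in A))%N]addnC; congr (_ + (_ + _))%N.
- by apply: eq_card => c; rewrite !inE.
- by rewrite !inE ltnn.
- apply: eq_card => c; rewrite !inE; case: (ltngtP c i) => [ci|ic|ci] /=.
  + by rewrite !andbF.
  + by rewrite andbT neq_ltn ic orbT.
  + by rewrite andbF (_ : c == i) //; apply/eqP/val_inj.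
Qed.

Lemma cAE (i : 'I_N) : cA A i = (N - k + sA A i + (i \in A))%N.
Proof. by have := sA_add_card_gt i; have := leq_card_N; rewrite /cA; lia. Qed.

Lemma tAE (i : 'I_N) : tA A i = #|[set c in ~: A | (c < i)%N]|.
Proof. by apply: eq_card => c; rewrite !inE. Qed.

Lemma tA_le (i : 'I_N) : (tA A i <= N - k)%N.
Proof.
rewrite tAE -card_setC_A; apply: subset_leq_card.
by apply/subsetP => c; rewrite !inE => /andP[].
Qed.

Lemma tA_lt (i : 'I_N) : i \notin A -> (tA A i < N - k)%N.
Proof.
move=> iA; rewrite tAE -card_setC_A.
have <- : #|i |: [set c in ~: A | (c < i)%N]| = #|[set c in ~: A | (c < i)%N]|.+1.
  by rewrite cardsU1 !inE ltnn andbF.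
by apply: subset_leq_card; apply/subsetP => c; rewrite !inE => /orP[/eqP ->|/andP[]].
Qed.

Lemma nth_enumC_tA x0 (i : 'I_N) : i \notin A -> nth x0 (enum (~: A)) (tA A i) = i.
Proof. by move=> iA; rewrite tAE nth_enum_card_lt // inE. Qed.

Lemma tA_nth_enumC x0 a : (a < N - k)%N -> tA A (nth x0 (enum (~: A)) a) = a.
Proof. by move=> aNk; rewrite tAE card_lt_nth_enum // card_setC_A. Qed.

Lemma nth_enum_sA x0 (i : 'I_N) : i \in A -> nth x0 (enum A) (sA A i) = i.
Proof. exact: nth_enum_card_lt. Qed.

Lemma sA_nth_enum x0 a : (a < k)%N -> sA A (nth x0 (enum A) a) = a.
Proof. by move=> ak; rewrite /sA card_lt_nth_enum // hA. Qed.

Lemma nth_enumC_notin x0 a : (a < N - k)%N -> nth x0 (enum (~: A)) a \notin A.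
Proof.
move=> aNk; suff : nth x0 (enum (~: A)) a \in enum (~: A) by rewrite mem_enum inE.
by rewrite mem_nth // -cardE card_setC_A.
Qed.

Lemma nth_enum_in x0 a : (a < k)%N -> nth x0 (enum A) a \in A.
Proof. by move=> ak; rewrite -mem_enum mem_nth // -cardE hA. Qed.

End Blocks.

(* [phiA k A] is convertible to [rmap (phiA_rel A)], and [psiA k A] to [rmap (psiA_rel A)]. *)
Definition phiA_rel N k (A : {set 'I_N}) (i j : 'I_N) (a b : 'I_(N - k)) : bool :=
  [&& inUv A i j, (i - sA A i == a)%N & (j - sA A i == b)%N].
Definition psiA_rel N k (A : {set 'I_N}) (i j : 'I_N) (a b : 'I_k) : bool :=
  [&& inU A i j, (i - tA A i == a)%N & (j - (N - k) == b)%N].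

Section BlockBijections.
Variables (N k : nat) (A : {set 'I_N}).
Hypothesis hA : #|A| = k.

Lemma pos_bij_phiA :
  pos_bij (phiA_rel A) (inUv A) (fun a b : 'I_(N - k) => (a < b)%N).
Proof.
have kN := leq_card_N hA; split.
- move=> i j c d a b /and3P[/and3P[iA _ ij] /eqP ea /eqP eb].
  move=> /and3P[/and3P[cA' _ cd] /eqP ec /eqP ed].
  have := sA_add_tA A i; have := sA_add_tA A c => tc ti.
  have tic : tA A i = tA A c by lia.
  have ic : i = c by rewrite -(nth_enumC_tA i iA) tic nth_enumC_tA.
  by subst c; split => //; apply: ord_inj; lia.
- move=> i j a b c d /and3P[_ /eqP ea /eqP eb] /and3P[_ /eqP ec /eqP ed].
  by split; apply: ord_inj; lia.
- by move=> i j a b /andP[].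
- move=> i j a b /and3P[/and3P[_ _ ij] /eqP <- /eqP <-].
  by have := sA_add_tA A i; lia.
- move=> i j /[dup] Hij /and3P[iA jc ij].
  have := sA_add_tA A i; have := tA_lt hA iA; rewrite (cAE hA) (negPf iA) in jc => ti tAi.
  have la : (i - sA A i < N - k)%N by lia.
  have lb : (j - sA A i < N - k)%N by lia.
  by exists (Ordinal la), (Ordinal lb); rewrite /phiA_rel Hij /= !eqxx.
- move=> a b ab; have aN : (a < N)%N by have := ltn_ord a; lia.
  pose i := nth (Ordinal aN) (enum (~: A)) a.
  have iA : i \notin A := nth_enumC_notin hA _ (ltn_ord a).
  have ta : tA A i = a := tA_nth_enumC hA _ (ltn_ord a).
  have := sA_add_tA A i; have := sA_add_card_gt hA i; have := ltn_ord b => bNk sk ti.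
  have jN : (b + sA A i < N)%N by lia.
  exists i, (Ordinal jN); rewrite /phiA_rel /inUv (cAE hA) iA /=.
  by apply/and3P; split; [apply/andP; split | apply/eqP | apply/eqP]; lia.
Qed.

Lemma pos_bij_psiA :
  pos_bij (psiA_rel A) (inU A) (fun a b : 'I_k => (a < b)%N).
Proof.
have kN := leq_card_N hA; split.
- move=> i j c d a b /and3P[/and3P[iA ji ij] /eqP ea /eqP eb].
  move=> /and3P[/and3P[cA' dc cd] /eqP ec /eqP ed].
  rewrite !(cAE hA) iA cA' in ji dc.
  have := sA_add_tA A i; have := sA_add_tA A c => tc ti.
  have sic : sA A i = sA A c by lia.
  have ic : i = c by rewrite -(nth_enum_sA i iA) sic nth_enum_sA.
  by subst c; split => //; apply: ord_inj; lia.
- move=> i j a b c d /and3P[_ /eqP ea /eqP eb] /and3P[_ /eqP ec /eqP ed].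
  by split; apply: ord_inj; lia.
- by move=> i j a b /andP[].
- move=> i j a b /and3P[/and3P[iA ji ij] /eqP <- /eqP <-].
  by rewrite (cAE hA) iA in ji; have := sA_add_tA A i; lia.
- move=> i j /[dup] Hij /and3P[iA ji ij].
  rewrite (cAE hA) iA in ji; have := sA_add_tA A i; have := sA_add_card_gt hA i.
  rewrite iA => sk ti; have la : (i - tA A i < k)%N by lia.
  have lb : (j - (N - k) < k)%N by have := ltn_ord j; lia.
  by exists (Ordinal la), (Ordinal lb); rewrite /psiA_rel Hij /= !eqxx.
- move=> a b ab; have aN : (a < N)%N by have := ltn_ord a; lia.
  pose i := nth (Ordinal aN) (enum A) a.
  have iA : i \in A := nth_enum_in hA _ (ltn_ord a).
  have sa : sA A i = a := sA_nth_enum hA _ (ltn_ord a).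
  have := sA_add_tA A i; have := tA_le hA i; have := ltn_ord b => bk tNk ti.
  have jN : (b + (N - k) < N)%N by lia.
  exists i, (Ordinal jN); rewrite /psiA_rel /inU (cAE hA) iA /=.
  by apply/and3P; split; [apply/andP; split | apply/eqP | apply/eqP]; lia.
Qed.

End BlockBijections.

Lemma card_ord_gt l (i : 'I_l) : #|[set v : 'I_l | (i < v)%N]| = (l - i.+1)%N.
Proof.
have := cardsC [set v : 'I_l | (i < v)%N]; rewrite card_ord.
have -> : ~: [set v : 'I_l | (i < v)%N] = i |: [set v : 'I_l | (v < i)%N].
  by apply/setP => v; rewrite !inE -leqNgt leq_eqVlt val_eqE.
by rewrite cardsU1 card_ord_lt inE ltnn; lia.
Qed.

Lemma invc_le l (y : 'S_l) (i : 'I_l) : (invc y i <= l - i.+1)%N.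
Proof.
rewrite -card_ord_gt -(card_preimset _ (@perm_inj _ y)); apply: subset_leq_card.
by apply/subsetP => x; rewrite !inE => /andP[].
Qed.

Lemma nth_invtab l (y : 'S_l) (a : 'I_l) : nth 0%N (invtab y) a = invc y a.
Proof. by rewrite /invtab (nth_map a) ?size_enum_ord // nth_ord_enum. Qed.

Lemma invc_lift_perm0 l (p : 'I_l.+1) (y : 'S_l) : invc (lift_perm p ord0 y) ord0 = p.
Proof.
set z := lift_perm p ord0 y.
have zp : z p = ord0 by rewrite lift_perm_id.
have zi : (z^-1)%g ord0 = p by rewrite -zp permK.
rewrite /invc zi -[RHS](card_ord_lt p); apply: eq_card => i; rewrite !inE.
case: (ltnP i p) => //= ip; rewrite lt0n; apply/negP => /eqP z0.
have : z i = z p by apply: ord_inj; rewrite zp z0.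
by move/perm_inj => e; move: ip; rewrite e ltnn.
Qed.

Lemma ltn_lift n (p : 'I_n.+1) (a b : 'I_n) : (lift p a < lift p b)%N = (a < b)%N.
Proof. by rewrite /= /bump; case: (leqP p a); case: (leqP p b) => /= ? ?; lia. Qed.

Lemma invc_lift_perm l (p : 'I_l.+1) (y : 'S_l) (k : 'I_l) :
  invc (lift_perm p ord0 y) (lift ord0 k) = invc y k.
Proof.
set z := lift_perm p ord0 y.
have zi : (z^-1)%g (lift ord0 k) = lift p ((y^-1)%g k).
  by apply: (perm_inj (s := z)); rewrite permKV /z lift_perm_lift permKV.
rewrite /invc zi -(card_imset _ (@lift_inj _ p)); apply: eq_card => i; rewrite !inE.
apply/idP/imsetP => [|[i' + ->]]; last by rewrite inE ltn_lift /z lift_perm_lift ltn_lift.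
case: (unliftP p i) => [i' ->|->]; last by rewrite /z lift_perm_id ltn0 andbF.
by rewrite ltn_lift /z lift_perm_lift ltn_lift => H; exists i'; rewrite ?inE.
Qed.

(* Prepending c0 to an inversion table corresponds to inserting 1 at position c0 + 1. *)
Lemma invtab_exists l (c : seq nat) : size c = l ->
  (forall i, (i < l)%N -> (nth 0 c i <= l - i.+1)%N) -> exists y : 'S_l, invtab y = c.
Proof.
elim: l c => [|l IH] [|c0 c] //= => [_ _|[sc] cle].
  by exists 1%g; rewrite /invtab enum_ord0.
have [y yc] : exists y : 'S_l, invtab y = c by apply: IH => // i il; apply: (cle i.+1).
have c0l : (c0 < l.+1)%N by have := cle 0 isT; rewrite subn1.
exists (lift_perm (Ordinal c0l) ord0 y).
rewrite /invtab enum_ordSl /= invc_lift_perm0 -yc /invtab -map_comp; congr (_ :: _).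
by apply: eq_map => i /=; rewrite invc_lift_perm.
Qed.

Section ComponentPermutations.
Variables (N k : nat) (A : {set 'I_N}) (w : 'S_N).
Hypothesis hA : #|A| = k.

Lemma size_sub_invtab : size (sub_invtab w (~: A)) = (N - k)%N.
Proof. by rewrite /sub_invtab size_map -cardE (card_setC_A hA). Qed.

Lemma nth_sub_invtab (i : 'I_N) : i \notin A ->
  nth 0%N (sub_invtab w (~: A)) (tA A i) = invc w i.
Proof.
move=> iA; rewrite /sub_invtab (nth_map i); last by rewrite -cardE (card_setC_A hA) tA_lt.
by rewrite nth_enumC_tA.
Qed.

Lemma invtab_yB : is_invtable (sub_invtab w (~: A)) ->
  invtab (yB w A k) = sub_invtab w (~: A).
Proof.
move=> /allP inv; rewrite /yB; case: pickP => [y /eqP //|none].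
have [y yw] : exists y : 'S_(N - k), invtab y = sub_invtab w (~: A).
  apply: invtab_exists; first exact: size_sub_invtab.
  by move=> i il; have := inv i; rewrite size_sub_invtab mem_iota add0n il; apply.
by have := none y; rewrite yw eqxx.
Qed.

Lemma invc_yB (i : 'I_N) (a : 'I_(N - k)) : is_invtable (sub_invtab w (~: A)) ->
  i \notin A -> a = tA A i :> nat -> invc (yB w A k) a = invc w i.
Proof. by move=> inv iA ea; rewrite -nth_invtab invtab_yB // ea nth_sub_invtab. Qed.

Let dinvtab_uA := [seq minn (N - (p.2 : 'I_N).+1 - invc w p.2) (k - p.1.+1)
              | p <- zip (iota 0 k) (enum A)].

Lemma nth_dinvtab_uA x0 a : (a < k)%N ->
  nth 0%N dinvtab_uA a = minn (N - (nth x0 (enum A) a).+1 - invc w (nth x0 (enum A) a)) (k - a.+1).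
Proof.
move=> ak; rewrite (nth_map (0%N, x0)); last by rewrite size_zip size_iota -cardE hA minnn.
by rewrite nth_zip /= ?size_iota -?cardE ?hA // nth_iota.
Qed.

Lemma invc_uA x0 (a : 'I_k) : invc (uA w A k) a =
  (k - a.+1 - minn (N - (nth x0 (enum A) a).+1 - invc w (nth x0 (enum A) a)) (k - a.+1))%N.
Proof.
have dinvtab_invc (u : 'S_k) : dinvtab u = dinvtab_uA -> invc u a =
    (k - a.+1 - minn (N - (nth x0 (enum A) a).+1 - invc w (nth x0 (enum A) a)) (k - a.+1))%N.
  move=> /(congr1 (nth 0%N ^~ a)); rewrite (nth_dinvtab_uA x0 (ltn_ord a)) /dinvtab.
  by rewrite (nth_map a) ?size_enum_ord // nth_ord_enum; have := invc_le u a; lia.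
rewrite /uA; case: pickP => [u /eqP|none]; first exact: dinvtab_invc.
have [u uD] : exists u : 'S_k, invtab u = [seq (k - i.+1 - nth 0 dinvtab_uA i)%N | i <- iota 0 k].
  apply: invtab_exists => [|i ik]; first by rewrite size_map size_iota.
  by rewrite (nth_map 0%N) ?size_iota // nth_iota // add0n leq_subr.
suff uD' : dinvtab u = dinvtab_uA by have := none u; rewrite -/dinvtab_uA uD' eqxx.
apply: (@eq_from_nth _ 0%N) => [|i].
  by rewrite /dinvtab size_map size_enum_ord size_map size_zip size_iota -cardE hA minnn.
rewrite /dinvtab size_map size_enum_ord => ik.
rewrite (nth_map (Ordinal ik)) ?size_enum_ord // -[i]/(nat_of_ord (Ordinal ik)) nth_ord_enum.
rewrite -nth_invtab uD (nth_map 0%N) ?size_iota // nth_iota //=.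
have : (nth 0 dinvtab_uA i <= k - i.+1)%N by rewrite (nth_dinvtab_uA x0 ik) geq_minr.
by rewrite add0n; lia.
Qed.

End ComponentPermutations.

Definition allowed N (w : 'S_N) (i j : 'I_N) := (i < j)%N && (j <= i + invc w i)%N.

Lemma utwE (F : finFieldType) N (w : 'S_N) : utw F w = suppg F (allowed w).
Proof. by []. Qed.

Section AllowedPositions.
Variables (N k : nat) (A : {set 'I_N}) (w : 'S_N).
Hypothesis hA : #|A| = k.

Lemma allowed_phiA i j (a b : 'I_(N - k)) : is_invtable (sub_invtab w (~: A)) ->
  phiA_rel A i j a b -> allowed w i j = allowed (yB w A k) a b.
Proof.
move=> inv /and3P[/and3P[iA _ ij] /eqP ea /eqP eb].
have := sA_add_tA A i => ti; have ia : a = tA A i :> nat by lia.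
by rewrite /allowed (invc_yB hA inv iA ia); apply/andP/andP => -[? ?]; split; lia.
Qed.

Lemma allowed_psiA i j (a b : 'I_k) :
  psiA_rel A i j a b -> allowed w i j = allowed (uA w A k) a b.
Proof.
move=> /and3P[/and3P[iA jc ij] /eqP ea /eqP eb].
rewrite (cAE hA) iA in jc; have := sA_add_tA A i => ti.
have ia : a = sA A i :> nat by lia.
have := invc_le w i; have := leq_card_N hA; have := ltn_ord j; have := tA_le hA i.
rewrite /allowed (invc_uA w hA i) ia nth_enum_sA // => *.
by apply/andP/andP => -[? ?]; split; lia.
Qed.

(* Row i of R_A meets the positions allowed by w exactly when iota_i(w) exceeds the
   bound N - k - (tA i).+1 required at place tA i of the table iota(w)_B. *)
Lemma invtableE : is_invtable (sub_invtab w (~: A)) =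
  (npos (fun i j => inR A i j && allowed w i j) == 0%N).
Proof.
rewrite /npos cards_eq0; apply/idP/eqP => [/allP inv|R0].
  apply/setP => -[i j]; rewrite !inE /=; apply/negP => /andP[/and3P[iA jc ij] /andP[_ ja]].
  have := inv (tA A i); rewrite (size_sub_invtab w hA) mem_iota (tA_lt hA iA).
  rewrite (nth_sub_invtab w hA iA).
  rewrite (cAE hA) (negPf iA) in jc; have := sA_add_tA A i.
  by move=> ? /(_ isT); lia.
apply/allP => a; rewrite (size_sub_invtab w hA) mem_iota add0n => aNk /=; rewrite leqNgt.
apply/negP => big; have kN := leq_card_N hA; have aN : (a < N)%N by lia.
pose i := nth (Ordinal aN) (enum (~: A)) a.
have iA : i \notin A := nth_enumC_notin hA _ aNk.
have ta : tA A i = a := tA_nth_enumC hA _ aNk.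
rewrite -[in nth _ _ a]ta (nth_sub_invtab w hA iA) in big.
have := sA_add_tA A i; have := invc_le w i => wi ti.
have jN : (i + invc w i < N)%N by have := ltn_ord i; lia.
have : (i, Ordinal jN) \in set0.
  rewrite -R0 inE /= /inR /allowed (cAE hA) (negPf iA) /=.
  by apply/andP; split; apply/andP; split; lia.
by rewrite inE.
Qed.

End AllowedPositions.

Lemma utE (F : finFieldType) N : ut F N = suppg F (fun i j : 'I_N => (i < j)%N).
Proof. by []. Qed.

Lemma eq_npos N (P Q : 'I_N -> 'I_N -> bool) : (forall i j, P i j = Q i j) -> npos P = npos Q.
Proof. by move=> PQ; apply: eq_card => p; rewrite !inE PQ. Qed.

Section BlockCounts.
Variables (F : finFieldType) (N k : nat) (A : {set 'I_N}) (w : 'S_N).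
Hypothesis hA : #|A| = k.

Lemma npos_blocks (P : 'I_N -> 'I_N -> bool) : (forall i j, P i j -> (i < j)%N) ->
  npos P = (npos (fun i j => inL A i j && P i j) + npos (fun i j => inUv A i j && P i j)
          + npos (fun i j => inU A i j && P i j) + npos (fun i j => inR A i j && P i j))%N.
Proof.
have nposE (Q : 'I_N -> 'I_N -> bool) : npos Q = (\sum_(p : 'I_N * 'I_N) Q p.1 p.2)%N.
  by rewrite /npos -sum1_card big_mkcond; apply: eq_bigr => p _; rewrite inE; case: (Q _ _).
move=> Plt; rewrite !nposE -!big_split; apply: eq_bigr => -[i j] _ /=.
rewrite /inL /inUv /inU /inR; case Pij: (P i j); rewrite ?andbF // (Plt _ _ Pij) !andbT.
by rewrite ltnS; case: (i \in A); case: ltnP.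
Qed.

Lemma card_ut_blocks :
  #|ut F N| = (#|F| ^ (npos (inL A) + npos (inUv A) + npos (inU A) + npos (inR A)))%N.
Proof.
have ltE (X : 'I_N -> 'I_N -> bool) : (forall i j, X i j -> (i < j)%N) ->
    npos (fun i j => X i j && (i < j)%N) = npos X.
  by move=> Xlt; apply: eq_npos => i j; apply/andb_idr/Xlt.
by rewrite utE card_suppg npos_blocks // !ltE // => i j /and3P[].
Qed.

Lemma card_utw_blocks : is_invtable (sub_invtab w (~: A)) ->
  #|utw F w| = (#|F| ^ (npos (fun i j => inL A i j && allowed w i j)
     + npos (fun i j => inUv A i j && allowed w i j)
     + npos (fun i j => inU A i j && allowed w i j)))%N.
Proof.
rewrite (invtableE w hA) => /eqP R0.
by rewrite utwE card_suppg (npos_blocks (P := allowed w)) ?R0 ?addn0 // => i j /andP[].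
Qed.

Lemma card_ut_phiA : #|ut F (N - k)| = (#|F| ^ npos (inUv A))%N.
Proof.
rewrite utE card_suppg; congr (_ ^ _)%N; symmetry; apply: (npos_pos_bij (pos_bij_phiA hA)) => //.
by move=> i j a b /[dup] /(pos_bij_dom (pos_bij_phiA hA)) -> /(pos_bij_codom (pos_bij_phiA hA)) ->.
Qed.

Lemma card_ut_psiA : #|ut F k| = (#|F| ^ npos (inU A))%N.
Proof.
rewrite utE card_suppg; congr (_ ^ _)%N; symmetry; apply: (npos_pos_bij (pos_bij_psiA hA)) => //.
by move=> i j a b /[dup] /(pos_bij_dom (pos_bij_psiA hA)) -> /(pos_bij_codom (pos_bij_psiA hA)) ->.
Qed.

Lemma card_utw_yB : is_invtable (sub_invtab w (~: A)) ->
  #|utw F (yB w A k)| = (#|F| ^ npos (fun i j => inUv A i j && allowed w i j))%N.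
Proof.
move=> inv; rewrite utwE card_suppg; congr (_ ^ _)%N; symmetry.
apply: (npos_pos_bij (pos_bij_phiA hA)).
- by move=> i j a b Rij; rewrite (pos_bij_dom (pos_bij_phiA hA) Rij) (allowed_phiA hA inv Rij).
- by move=> i j /andP[].
- by move=> a b /andP[].
Qed.

Lemma card_utw_uA :
  #|utw F (uA w A k)| = (#|F| ^ npos (fun i j => inU A i j && allowed w i j))%N.
Proof.
rewrite utwE card_suppg; congr (_ ^ _)%N; symmetry.
apply: (npos_pos_bij (pos_bij_psiA hA)).
- by move=> i j a b Rij; rewrite (pos_bij_dom (pos_bij_psiA hA) Rij) (allowed_psiA w hA Rij).
- by move=> i j /andP[].
- by move=> a b /andP[].
Qed.

End BlockCounts.

Lemma sum_suppg_mem (F : finFieldType) N (P Q : 'I_N -> 'I_N -> bool) (g : 'M[F]_N -> algC) :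
  \sum_(x in suppg F P) g x * ((x \in suppg F Q) : nat)%:R =
  \sum_(x in suppg F (fun i j => P i j && Q i j)) g x.
Proof.
rewrite big_mkcond [RHS]big_mkcond; apply: eq_bigr => x _; rewrite suppgI.
by case: (x \in suppg F P); case: (x \in suppg F Q); rewrite ?mulr1 ?mulr0.
Qed.

Lemma chibarE (F : finFieldType) N (w : 'S_N) (x : 'M[F]_N) :
  chibar w x = #|ut F N|%:R / #|utw F w|%:R * ((x \in utw F w) : nat)%:R.
Proof.
rewrite /chibar; under eq_bigr => g _ do rewrite addrC addKr.
by rewrite sumr_const -[_ *+ #|ut F N|]mulr_natl mulrCA mulrA.
Qed.

Section DelaChibar.
Variables (F : finFieldType) (N k : nat) (A : {set 'I_N}) (w : 'S_N).
Hypothesis hA : #|A| = k.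

Lemma suppg_blocksD (Q : 'I_N -> 'I_N -> bool) (l x y r : 'M[F]_N) :
  l \in suppg F (inL A) -> x \in suppg F (inUv A) -> y \in suppg F (inU A) ->
  r \in suppg F (inR A) ->
  (l + x + y + r \in suppg F Q) =
  [&& l \in suppg F Q, x \in suppg F Q, y \in suppg F Q & r \in suppg F Q].
Proof.
move=> lL xU yU rR.
rewrite (suppgD_disjoint Q _ (suppgD (suppgD lL xU) yU) rR).
rewrite ?(suppgD_disjoint Q _ (suppgD lL xU) yU).
rewrite ?(suppgD_disjoint Q _ lL xU) -?andbA //.
all: move=> i j; rewrite /inL /inUv /inU /inR ?ltnS.
all: by case: (i \in A); case: ltnP; rewrite //= ?andbF.
Qed.

Lemma sum_phiA_utw (u' : 'M[F]_(N - k)) :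
  is_invtable (sub_invtab w (~: A)) -> u' \in ut F (N - k) ->
  \sum_(x in suppg F (inUv A) | phiA k A x == u') ((x \in utw F w) : nat)%:R =
  ((u' \in utw F (yB w A k)) : nat)%:R :> algC.
Proof.
move=> inv u'ut; rewrite (sum_rmap_eq (pos_bij_phiA hA)) // utwE.
rewrite (rmap_inv_suppg (pos_bij_phiA hA) (Q2 := allowed (yB w A k))) // => i j a b.
exact: allowed_phiA.
Qed.

Lemma sum_psiA_utw (u : 'M[F]_k) : u \in ut F k ->
  \sum_(y in suppg F (inU A) | psiA k A y == u) ((y \in utw F w) : nat)%:R =
  ((u \in utw F (uA w A k)) : nat)%:R :> algC.
Proof.
move=> uut; rewrite (sum_rmap_eq (pos_bij_psiA hA)) // utwE.
rewrite (rmap_inv_suppg (pos_bij_psiA hA) (Q2 := allowed (uA w A k))) // => i j a b.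
exact: allowed_psiA.
Qed.

Lemma Dela_chibar_factor (u' : 'M[F]_(N - k)) (u : 'M[F]_k) :
  Dela k A (chibar w) u' u =
  #|F|%:R ^- (npos (inL A) + npos (inR A)) * (#|ut F N|%:R / #|utw F w|%:R) *
  (\sum_(l in suppg F (inL A)) ((l \in utw F w) : nat)%:R) *
  (\sum_(r in suppg F (inR A)) (-1 / (#|F|%:R - 1)) ^+ nnz r * ((r \in utw F w) : nat)%:R) *
  (\sum_(x in suppg F (inUv A) | phiA k A x == u') ((x \in utw F w) : nat)%:R) *
  (\sum_(y in suppg F (inU A) | psiA k A y == u) ((y \in utw F w) : nat)%:R).
Proof.
set a := -1 / _; set C := _ / _; rewrite /Dela.
have -> : \sum_(l in suppg F (inL A)) \sum_(r in suppg F (inR A))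
    \sum_(x in suppg F (inUv A) | phiA k A x == u') \sum_(y in suppg F (inU A) | psiA k A y == u)
      a ^+ nnz r * chibar w (l + x + y + r) =
  C * \sum_(l in suppg F (inL A)) (((l \in utw F w) : nat)%:R *
    \sum_(r in suppg F (inR A)) (a ^+ nnz r * ((r \in utw F w) : nat)%:R *
      \sum_(x in suppg F (inUv A) | phiA k A x == u') (((x \in utw F w) : nat)%:R *
        \sum_(y in suppg F (inU A) | psiA k A y == u) ((y \in utw F w) : nat)%:R))).
  rewrite mulr_sumr; apply: eq_bigr => l lL; rewrite !mulr_sumr; apply: eq_bigr => r rR.
  rewrite !mulr_sumr; apply: eq_bigr => x /andP[xU _].
  rewrite !mulr_sumr; apply: eq_bigr => y /andP[yU _].
  rewrite chibarE -/C utwE (suppg_blocksD _ lL xU yU rR) -!utwE.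
  by case: (l \in utw F w); case: (x \in utw F w); case: (y \in utw F w); case: (r \in utw F w);
    rewrite /= ?mulr0n ?mulr1n; ring.
under eq_bigr => l _ do under eq_bigr => r _ do rewrite -mulr_suml.
under eq_bigr => l _ do rewrite -mulr_suml.
by rewrite -mulr_suml !mulrA.
Qed.

Lemma Dela_chibar (u' : 'M[F]_(N - k)) (u : 'M[F]_k) :
  u' \in ut F (N - k) -> u \in ut F k ->
  Dela k A (chibar w) u' u = if is_invtable (sub_invtab w (~: A))
    then chibar (yB w A k) u' * chibar (uA w A k) u else 0.
Proof.
move=> u'ut uut; set q : algC := #|F|%:R.
have q_gt1 : (1 < #|F|)%N := card_finNzRing_gt1 F.
have q1 : (#|F|.-1)%:R = q - 1 by rewrite /q -[in RHS](prednK (ltnW q_gt1)) -natr1 addrK.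
have q1_neq0 : q - 1 != 0 by rewrite -q1 pnatr_eq0 -lt0n -ltnS prednK // ltnW.
have sumL : \sum_(l in suppg F (inL A)) ((l \in utw F w) : nat)%:R =
    q ^+ npos (fun i j => inL A i j && allowed w i j).
  transitivity (\sum_(l in suppg F (inL A)) 1 ^+ nnz l * ((l \in utw F w) : nat)%:R : algC).
    by apply: eq_bigr => l _; rewrite expr1n mul1r.
  by rewrite utwE sum_suppg_mem sum_suppg_exp_nnz mulr1 nat1r prednK // ltnW.
have sumR : \sum_(r in suppg F (inR A)) (-1 / (q - 1)) ^+ nnz r * ((r \in utw F w) : nat)%:R =
    (is_invtable (sub_invtab w (~: A)) : nat)%:R.
  rewrite utwE sum_suppg_mem sum_suppg_exp_nnz q1 (invtableE w hA).
  by rewrite (_ : 1 + _ = 0) ?expr0n //; field.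
rewrite Dela_chibar_factor -/q sumL sumR; case: ifP => inv; last by rewrite mulr0n mulr0 !mul0r.
rewrite sum_phiA_utw // sum_psiA_utw // !chibarE.
rewrite mulr1n (card_ut_blocks F A) (card_utw_blocks F hA) //.
rewrite (card_ut_phiA F hA) (card_utw_yB F hA) //.
rewrite (card_ut_psiA F hA) (card_utw_uA F w hA) !natrX -/q !exprD.
by field; rewrite !expf_neq0 // pnatr_eq0 -lt0n ltnW.
Qed.

End DelaChibar.

Unset Implicit Arguments.

Theorem theorem5p5 (F : finFieldType) (n : nat) (w : 'S_n) (k : nat)
  (u' : 'M[F]_(n - k)) (u : 'M[F]_k) :
  (k <= n)%N -> u' \in ut F (n - k) -> u \in ut F k ->
  Delta (chibar w) k u' u =
  \sum_(A : {set 'I_n} | (#|A| == k) && is_invtable (sub_invtab w (~: A)))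
     chibar (yB w A k) u' * chibar (uA w A k) u.
Proof.
move=> _ u'ut uut; rewrite /Delta [RHS]big_mkcondr /=.
by apply: eq_bigr => A /eqP hA; apply: Dela_chibar.
Qed.
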